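(* For every $\beta>1$, the set $\mathrm{Per}(\sigma|_{X_\beta})$ of all periodic points of the $\beta$-shift $X_\beta$ is strongly linkable.
   Context: Shift: for an alphabet $\mathcal A=\{0,1,\dots,r-1\}$, $\mathcal A^{\mathbb N}$ carries the metric $\rho(x,y)=2^{-\min\{k:x_k\ne y_k\}}$ for $x\ne y$, and $\sigma((\omega_i)_i)=(\omega_{i+1})_i$. $\beta$-shift: fix $\beta>1$, $T_\beta(x)=\beta x\bmod1$. The $\beta$-expansion of $1$ is $d_\beta=(d_j)_{j\ge1}$ with $d_j=\lfloor\beta T_\beta^{j-1}(1)\rfloor$. If $d_\beta$ ends in $0^\infty$ with last nonzero digit $d_k$, set $\widehat d_\beta=(d_1\dots d_{k-1}(d_k-1))^\infty$; otherwise $\widehat d_\beta=d_\beta$. The $\beta$-shift $X_\beta\subset\{0,\dots,\lfloor\beta\rfloor\}^{\mathbb N}$ is the closure of the set of sequences $b$ with $\sigma^k(b)\prec\widehat d_\beta$ (lexicographic order) for all $k\ge0$. $B(x,n,\varepsilon)=\{y:\rho(\sigma^jy,\sigma^jx)<\varepsilon,\ 0\le j<n\}$. A set $K$ of periodic points is strongly linkable if for all $y_1,y_2\in K$ and $\varepsilon>0$ there is $N=N(y_1,y_2,\varepsilon)$ such that for all integers $p_1,p_2\ge N$ with $\sigma^{p_j}y_j=y_j$ ($j=1,2$) there exist $z\in K$ and integers $q_1\le q_2$ with $\sigma^{q_2}z=z$, $p_1\le q_1\le(1+\varepsilon)p_1$, $z\in B(y_1,p_1,\varepsilon)$, $p_2\le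 q_2-q_1\le(1+\varepsilon)p_2$ and $\sigma^{q_1}z\in B(y_2,p_2,\varepsilon)$. *)

From Stdlib Require Import Reals Lra Lia ZArith Arith Classical ClassicalEpsilon.
Open Scope R_scope.

Definition sequence := nat -> nat.

Definition shift (x : sequence) : sequence := fun i => x (S i).
Definition shiftn (n : nat) (x : sequence) : sequence := fun i => x (i + n)%nat.

Definition rho_spec (x y : sequence) (r : R) : Prop :=
  ((forall k, x k = y k) /\ r = 0) \/
  (exists m : nat, (forall k, (k < m)%nat -> x k = y k) /\ x m <> y m /\ r = / (2 ^ m)).

Definition rho (x y : sequence) : R := epsilon (inhabits 0) (rho_spec x y).

Definition bowen_ball (x : sequence) (n : nat) (eps : R) (y : sequence) : Prop :=
  forall j : nat, (j < n)%nat -> rho (shiftn j y) (shiftn j x) < eps.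

Definition Tbeta (beta x : R) : R := frac_part (beta * x).

(* floor as a nat (used only on nonnegative arguments). *)
Definition nfloor (x : R) : nat := Z.to_nat (Int_part x).

(* beta-expansion of 1, 0-indexed: dseq beta i = d_{i+1} = floor(beta T^i(1)). *)
Definition dseq (beta : R) : sequence :=
  fun i => nfloor (beta * Nat.iter i (Tbeta beta) 1).

Definition finite_expansion_at (beta : R) (k : nat) : Prop :=
  dseq beta k <> 0%nat /\ forall j, (k < j)%nat -> dseq beta j = 0%nat.

(* The periodic word (d_1 ... d_{k} (d_{k+1}-1))^infty in 0-indexed form. *)
Definition hat_of (d : sequence) (k : nat) : sequence :=
  fun i => let r := (i mod (S k))%nat in
           if Nat.eqb r k then (d k - 1)%nat else d r.

Definition hat_d (beta : R) : sequence :=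
  match excluded_middle_informative (exists k, finite_expansion_at beta k) with
  | left H => hat_of (dseq beta) (proj1_sig (constructive_indefinite_description _ H))
  | right _ => dseq beta
  end.

Definition lex_lt (a b : sequence) : Prop :=
  exists n, (forall i, (i < n)%nat -> a i = b i) /\ (a n < b n)%nat.

Definition in_alphabet (beta : R) (x : sequence) : Prop :=
  forall i, (x i <= nfloor beta)%nat.

Definition beta_admissible (beta : R) (b : sequence) : Prop :=
  in_alphabet beta b /\ forall k : nat, lex_lt (shiftn k b) (hat_d beta).

Definition X_beta (beta : R) (x : sequence) : Prop :=
  in_alphabet beta x /\
  forall eps : R, 0 < eps -> exists b, beta_admissible beta b /\ rho x b < eps.

Definition Per_beta (beta : R) (x : sequence) : Prop :=
  X_beta beta x /\ exists p : nat, (1 <= p)%nat /\ forall i, shiftn p x i = x i.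

Definition strongly_linkable (K : sequence -> Prop) : Prop :=
  forall y1 y2 : sequence, K y1 -> K y2 ->
  forall eps : R, 0 < eps ->
  exists N : nat,
  forall p1 p2 : nat, (N <= p1)%nat -> (N <= p2)%nat ->
    (forall i, shiftn p1 y1 i = y1 i) -> (forall i, shiftn p2 y2 i = y2 i) ->
    exists (z : sequence) (q1 q2 : nat),
      K z /\ (q1 <= q2)%nat /\ (forall i, shiftn q2 z i = z i) /\
      (p1 <= q1)%nat /\ INR q1 <= (1 + eps) * INR p1 /\
      bowen_ball y1 p1 eps z /\
      (p2 <= q2 - q1)%nat /\ INR (q2 - q1) <= (1 + eps) * INR p2 /\
      bowen_ball y2 p2 eps (shiftn q1 z).

From Stdlib Require Import Reals Lra Lia ZArith Arith Classical ClassicalEpsilon.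
From Stdlib Require Import FunctionalExtensionality.
Open Scope R_scope.

(* Every point x of X_beta satisfies sigma^k x <= hat_d beta for all k, and conversely,
   since hat_d beta has infinitely many nonzero digits, every such x is a limit of its
   admissible truncations.  Two periodic points y1, y2 of periods P1, P2 are linked by
   the periodic point with period block y1[0, p1 + M) 0^g y2[0, p2 + M) 0^g, where
   2^-M < eps and g > P1, P2; the overhead M + g is at most eps p once p is large. *)

Lemma nat_least (P : nat -> Prop) :
  (exists n, P n) -> exists n, P n /\ forall i, (i < n)%nat -> ~ P i.
Proof.
  intros [n Hn]. revert Hn. induction n as [n IH] using lt_wf_ind. intros Hn.
  destruct (classic (exists i, (i < n)%nat /\ P i)) as [[i [Hi Pi]]|H].
  - exact (IH i Hi Pi).
  - exists n. split; auto. intros i Hi Pi. apply H; eauto.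
Qed.

Lemma nat_last (P : nat -> Prop) (m : nat) :
  P 0%nat -> (forall j, (m <= j)%nat -> ~ P j) ->
  exists k, P k /\ forall j, (k < j)%nat -> ~ P j.
Proof.
  revert P. induction m as [|m IH]; intros P H0 H.
  - exfalso. exact (H 0%nat (le_n 0) H0).
  - destruct (classic (P m)) as [Hm|Hm].
    + exists m. split; [exact Hm|]. intros j Hj. apply H. lia.
    + apply IH; [exact H0|]. intros j Hj.
      destruct (Nat.eq_dec j m); [subst; exact Hm | apply H; lia].
Qed.

Lemma periodic_add_mul (y : sequence) (P : nat) :
  (forall i, y (i + P)%nat = y i) -> forall c i, y (i + P * c)%nat = y i.
Proof.
  intros H c. induction c as [|c IH]; intros i.
  - f_equal; lia.
  - replace (i + P * S c)%nat with (i + P * c + P)%nat by lia. rewrite H. apply IH.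
Qed.

(** * Lexicographic order *)

Lemma lex_lt_asym (a b : sequence) : lex_lt a b -> ~ lex_lt b a.
Proof.
  intros [n [H1 H2]] [m [H3 H4]].
  destruct (lt_eq_lt_dec n m) as [[Hlt|<-]|Hgt].
  - rewrite (H3 n Hlt) in H2. lia.
  - lia.
  - rewrite (H1 m Hgt) in H4. lia.
Qed.

Lemma lex_lt_of_prefix (x x' d : sequence) (n : nat) :
  (forall i, (i <= n)%nat -> x' i = x i) ->
  (forall i, (i < n)%nat -> x i = d i) -> (x n < d n)%nat -> lex_lt x' d.
Proof.
  intros Hx Hpre Hn. exists n. split.
  - intros i Hi. rewrite Hx by lia. auto.
  - rewrite Hx by lia. exact Hn.
Qed.

Lemma agree_or_lex_lt_before (d x : sequence) (m : nat) :
  ~ lex_lt d x ->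
  (forall i, (i < m)%nat -> x i = d i) \/
  exists n, (n < m)%nat /\ (forall i, (i < n)%nat -> x i = d i) /\ (x n < d n)%nat.
Proof.
  intros Hle.
  destruct (classic (exists i, (i < m)%nat /\ x i <> d i)) as [Hdiff|Hagree].
  - right. destruct (nat_least _ Hdiff) as [n [[Hn Hne] Hmin]].
    assert (Hpre : forall i, (i < n)%nat -> x i = d i).
    { intros i Hi. apply NNPP. intros Hne'. apply (Hmin i Hi). split; [lia | auto]. }
    exists n. repeat split; auto.
    destruct (lt_eq_lt_dec (x n) (d n)) as [[Hlt|Heq]|Hgt]; [exact Hlt | lia |].
    exfalso. apply Hle. exists n. split; auto. intros i Hi. symmetry. auto.
  - left. intros i Hi. apply NNPP. intros Hne. apply Hagree. eauto.
Qed.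

Lemma lex_lt_of_zero_run (d x : sequence) (m f : nat) :
  (forall i, (i < m)%nat -> x i = d i) -> (forall i, (m <= i <= f)%nat -> x i = 0%nat) ->
  (m <= f)%nat -> d f <> 0%nat -> lex_lt x d.
Proof.
  intros Hpre Hzero Hmf Hdf.
  destruct (nat_least (fun j => (m <= j)%nat /\ d j <> 0%nat)) as [f0 [[Hf0 Hdf0] Hmin]].
  { exists f; auto. }
  assert (f0 <= f)%nat.
  { destruct (le_lt_dec f0 f); auto. exfalso. apply (Hmin f); auto. }
  exists f0. split.
  - intros i Hi. destruct (lt_dec i m); auto.
    rewrite Hzero by lia. destruct (Nat.eq_dec (d i) 0); auto.
    exfalso. apply (Hmin i); [lia | split; [lia | auto]].
  - rewrite Hzero by lia. lia.
Qed.

Lemma nonzero_digit_before (d x : sequence) (m j : nat) :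
  ~ lex_lt d x -> (forall i, (i < m)%nat -> x i = d i) ->
  (m <= j)%nat -> x j <> 0%nat -> exists f, (m <= f <= j)%nat /\ d f <> 0%nat.
Proof.
  intros Hle Hpre Hmj Hxj. apply NNPP. intros Hno.
  assert (Hdz : forall f, (m <= f <= j)%nat -> d f = 0%nat).
  { intros f Hf. apply NNPP. intros Hdf. apply Hno. eauto. }
  destruct (agree_or_lex_lt_before d x (S j) Hle) as [Hagree | [n [Hn [_ Hlt]]]].
  - apply Hxj. rewrite Hagree by lia. apply Hdz. lia.
  - destruct (lt_dec n m).
    + rewrite Hpre in Hlt by lia. lia.
    + rewrite Hdz in Hlt by lia. lia.
Qed.

(** * Sequences whose shifts stay below a given sequence *)

Definition shifts_lex_le (d x : sequence) : Prop := forall k, ~ lex_lt d (shiftn k x).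

Lemma shifts_lex_le_periodic (d z : sequence) (q : nat) :
  (1 <= q)%nat -> (forall i, z (i + q)%nat = z i) ->
  (forall k, (k < q)%nat -> ~ lex_lt d (shiftn k z)) -> shifts_lex_le d z.
Proof.
  intros Hq Hper Hlow k.
  replace (shiftn k z) with (shiftn (k mod q) z).
  - apply Hlow. apply Nat.mod_upper_bound. lia.
  - apply functional_extensionality. intros i. unfold shiftn.
    rewrite (Nat.div_mod_eq k q) at 2.
    replace (i + (q * (k / q) + k mod q))%nat with (i + k mod q + q * (k / q))%nat by lia.
    symmetry. apply periodic_add_mul. exact Hper.
Qed.

Section ShiftsBelow.

Variable d : sequence.
Hypothesis d0_pos : (1 <= d 0%nat)%nat.

Lemma not_lex_lt_shift_at_zero (z : sequence) (k : nat) :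
  z k = 0%nat -> ~ lex_lt d (shiftn k z).
Proof.
  intros Hz [[|n] [Hpre Hn]]; unfold shiftn in *.
  - simpl in Hn. lia.
  - specialize (Hpre 0%nat ltac:(lia)). simpl in Hpre. lia.
Qed.

(* A window starting inside a copy of [y] that is followed by [G] zeros: either the
   comparison is settled inside the copy, or [d] agrees with [y] there; in the latter case
   the first digit of the window is [d 0 > 0], so by periodicity [y] has a nonzero digit
   within [P < G] further places, hence so does [d], and that digit beats the zeros. *)
Lemma not_lex_lt_shift_in_block (z y : sequence) (s L G P t : nat) :
  shifts_lex_le d y -> (1 <= P)%nat -> (P < G)%nat ->
  (forall i, y (i + P)%nat = y i) ->
  (forall i, (i < L)%nat -> z (s + i)%nat = y i) ->
  (forall i, (i < G)%nat -> z (s + L + i)%nat = 0%nat) ->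
  (t < L)%nat -> ~ lex_lt d (shiftn (s + t) z).
Proof.
  intros Hy HP HPG Hper Hcopy Hzero Ht Hgt.
  set (m := (L - t)%nat).
  assert (Hwin : forall i, (i < m)%nat -> shiftn (s + t) z i = shiftn t y i).
  { intros i Hi. unfold shiftn. rewrite <- Hcopy by lia. f_equal. lia. }
  apply (lex_lt_asym d (shiftn (s + t) z) Hgt).
  destruct (agree_or_lex_lt_before d (shiftn t y) m (Hy t))
    as [Hagree | [n [Hn [Hpre Hlt]]]].
  - set (c := (m / P + 1)%nat).
    assert (Hc : (m < P * c <= m + P)%nat).
    { pose proof (Nat.div_mod_eq m P). pose proof (Nat.mod_upper_bound m P ltac:(lia)).
      unfold c. lia. }
    assert (Hyc : shiftn t y (P * c)%nat <> 0%nat).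
    { unfold shiftn. rewrite Nat.add_comm, periodic_add_mul by exact Hper.
      specialize (Hagree 0%nat ltac:(lia)). unfold shiftn in Hagree. simpl in Hagree. lia. }
    destruct (nonzero_digit_before d (shiftn t y) m (P * c)%nat (Hy t) Hagree ltac:(lia) Hyc)
      as [f [Hf Hdf]].
    apply (lex_lt_of_zero_run d _ m f); [| | lia | exact Hdf].
    + intros i Hi. rewrite Hwin by lia. auto.
    + intros i Hi. unfold shiftn.
      replace (i + (s + t))%nat with (s + L + (i - m))%nat by (unfold m; lia).
      apply Hzero. lia.
  - apply (lex_lt_of_prefix (shiftn t y) _ d n); auto.
    intros i Hi. apply Hwin. lia.
Qed.

End ShiftsBelow.

Definition truncate (L : nat) (x : sequence) : sequence :=
  fun i => if (i <? L)%nat then x i else 0%nat.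

Lemma truncate_lex_lt (d x : sequence) (L : nat) :
  (forall m, exists f, (m <= f)%nat /\ d f <> 0%nat) -> shifts_lex_le d x ->
  forall k, lex_lt (shiftn k (truncate L x)) d.
Proof.
  intros Hd Hx k.
  destruct (agree_or_lex_lt_before d (shiftn k x) (L - k) (Hx k))
    as [Hagree | [n [Hn [Hpre Hlt]]]].
  - destruct (Hd (L - k)%nat) as [f [Hf Hdf]].
    apply (lex_lt_of_zero_run d _ (L - k) f); auto.
    + intros i Hi. rewrite <- Hagree by exact Hi. unfold shiftn, truncate.
      destruct (Nat.ltb_spec (i + k) L); [reflexivity | lia].
    + intros i Hi. unfold shiftn, truncate. destruct (Nat.ltb_spec (i + k) L); lia.
  - apply (lex_lt_of_prefix (shiftn k x) _ d n); auto.
    intros i Hi. unfold shiftn, truncate. destruct (Nat.ltb_spec (i + k) L); [reflexivity | lia].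
Qed.

(** * The metric and Bowen balls *)

Lemma rho_spec_rho (x y : sequence) : rho_spec x y (rho x y).
Proof.
  unfold rho. apply epsilon_spec.
  destruct (classic (forall k, x k = y k)) as [Heq|Hne].
  - exists 0. left. auto.
  - apply not_all_ex_not in Hne.
    destruct (nat_least (fun k => x k <> y k) Hne) as [m [Hm Hmin]].
    exists (/ 2 ^ m). right. exists m. repeat split; auto.
    intros k Hk. apply NNPP. apply Hmin. exact Hk.
Qed.

Lemma inv_pow2_le (a b : nat) : (a <= b)%nat -> / 2 ^ b <= / 2 ^ a.
Proof.
  intros H. apply Rinv_le_contravar; [apply pow_lt; lra | apply Rle_pow; lra || lia].
Qed.

Lemma rho_le_of_agree (x y : sequence) (L : nat) :
  (forall i, (i < L)%nat -> x i = y i) -> rho x y <= / 2 ^ L.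
Proof.
  intros H. destruct (rho_spec_rho x y) as [[_ ->]|[m [_ [Hm ->]]]].
  - left. apply Rinv_0_lt_compat, pow_lt. lra.
  - apply inv_pow2_le. destruct (le_lt_dec L m); auto. exfalso. apply Hm, H. lia.
Qed.

Lemma agree_of_rho_lt (x y : sequence) (L : nat) :
  rho x y < / 2 ^ L -> forall i, (i <= L)%nat -> x i = y i.
Proof.
  intros H i Hi. destruct (rho_spec_rho x y) as [[Heq _]|[m [Hpre [_ Hr]]]]; auto.
  rewrite Hr in H. destruct (le_lt_dec m L) as [Hml|Hml].
  - pose proof (inv_pow2_le _ _ Hml). lra.
  - apply Hpre. lia.
Qed.

Lemma exists_inv_pow2_lt (eps : R) : 0 < eps -> exists M, / 2 ^ M < eps.
Proof.
  intros He. destruct (archimed_cor1 eps He) as [N [HN HN0]]. exists N.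
  apply (Rle_lt_trans _ (/ INR N)); auto.
  apply Rinv_le_contravar; [apply lt_0_INR; lia |].
  clear. induction N as [|N IH]; [simpl; lra |].
  rewrite S_INR. simpl. assert (1 <= 2 ^ N) by (apply pow_R1_Rle; lra). lra.
Qed.

Lemma bowen_ball_of_agree (y z : sequence) (n M : nat) (eps : R) :
  / 2 ^ M < eps -> (forall i, (i < n + M)%nat -> z i = y i) -> bowen_ball y n eps z.
Proof.
  intros HM Hagree j Hj. eapply Rle_lt_trans; [| exact HM].
  apply rho_le_of_agree. intros i Hi. unfold shiftn. apply Hagree. lia.
Qed.

Lemma linear_slack (eps : R) (c : nat) :
  0 < eps -> exists N, forall p, (N <= p)%nat -> INR (p + c) <= (1 + eps) * INR p.
Proof.
  intros He. destruct (archimed_cor1 eps He) as [N0 [HN0 HN0pos]].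
  exists (N0 * c)%nat. intros p Hp.
  apply le_INR in Hp. rewrite mult_INR in Hp. rewrite plus_INR.
  assert (HN : 0 < INR N0) by (apply lt_0_INR; lia).
  assert (1 < eps * INR N0).
  { apply (Rmult_lt_compat_l (INR N0)) in HN0; auto. rewrite Rinv_r in HN0; lra. }
  assert (0 <= INR c) by apply pos_INR.
  assert (eps * (INR N0 * INR c) <= eps * INR p) by (apply Rmult_le_compat_l; lra).
  nra.
Qed.

(** * The beta-expansion of 1 *)

Lemma frac_part_nfloor (r : R) : 0 <= r -> frac_part r = r - INR (nfloor r).
Proof.
  intros Hr. unfold frac_part, nfloor. destruct (base_Int_part r) as [_ Hlow].
  assert (Hnn : (0 <= Int_part r)%Z).
  { apply Z.lt_succ_r. apply lt_IZR. rewrite succ_IZR. lra. }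
  rewrite INR_IZR_INZ, Z2Nat.id by exact Hnn. reflexivity.
Qed.

Lemma dseq_0_pos (beta : R) : 1 < beta -> (1 <= dseq beta 0)%nat.
Proof.
  intros Hb. unfold dseq, nfloor. simpl. rewrite Rmult_1_r.
  destruct (base_Int_part beta) as [_ H].
  assert (0 < IZR (Int_part beta)) by lra. apply lt_IZR in H0. lia.
Qed.

Lemma Tbeta_orbit_bounds (beta : R) (j : nat) : 0 <= Nat.iter (S j) (Tbeta beta) 1 < 1.
Proof.
  change (0 <= Tbeta beta (Nat.iter j (Tbeta beta) 1) < 1).
  pose proof (base_fp (beta * Nat.iter j (Tbeta beta) 1)). unfold Tbeta at 1 3. lra.
Qed.

Lemma Tbeta_orbit_succ (beta : R) (j : nat) :
  1 < beta ->
  Nat.iter (S j) (Tbeta beta) 1 = beta * Nat.iter j (Tbeta beta) 1 - INR (dseq beta j).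
Proof.
  intros Hb. simpl. unfold Tbeta, dseq. apply frac_part_nfloor.
  destruct j as [|j]; [simpl; lra |].
  pose proof (Tbeta_orbit_bounds beta j). apply Rmult_le_pos; lra.
Qed.

(* If d_1 = 1 and all later digits vanish then T^(j+1)(1) = beta^j (beta - 1), which is unbounded. *)
Lemma not_finite_expansion_at_0 (beta : R) :
  1 < beta -> dseq beta 0%nat = 1%nat -> ~ finite_expansion_at beta 0%nat.
Proof.
  intros Hb Hd0 [_ Hzero].
  assert (Horbit : forall j, Nat.iter (S j) (Tbeta beta) 1 = beta ^ j * (beta - 1)).
  { induction j as [|j IH].
    - rewrite Tbeta_orbit_succ, Hd0 by exact Hb. simpl. lra.
    - rewrite Tbeta_orbit_succ, Hzero, IH by (exact Hb || lia). simpl. lra. }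
  destruct (Pow_x_infinity beta ltac:(rewrite Rabs_pos_eq; lra) (/ (beta - 1))) as [N HN].
  specialize (HN N (le_n N)). rewrite Rabs_pos_eq in HN by (apply pow_le; lra).
  pose proof (Tbeta_orbit_bounds beta N) as [_ Hlt]. rewrite Horbit in Hlt.
  apply Rge_le in HN. apply (Rmult_le_compat_r (beta - 1)) in HN; [| lra].
  rewrite Rinv_l in HN; lra.
Qed.

Lemma hat_d_0_pos (beta : R) : 1 < beta -> (1 <= hat_d beta 0%nat)%nat.
Proof.
  intros Hb. pose proof (dseq_0_pos beta Hb).
  unfold hat_d. destruct excluded_middle_informative as [Hfin|]; [| exact H].
  destruct constructive_indefinite_description as [k Hk]. simpl.
  unfold hat_of. rewrite Nat.Div0.mod_0_l.
  destruct (Nat.eqb_spec 0 k) as [<-|]; [| exact H].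
  destruct (Nat.eq_dec (dseq beta 0%nat) 1%nat) as [Hone|]; [| lia].
  exfalso. exact (not_finite_expansion_at_0 beta Hb Hone Hk).
Qed.

Lemma hat_d_nonzero_unbounded (beta : R) :
  1 < beta -> forall m, exists f, (m <= f)%nat /\ hat_d beta f <> 0%nat.
Proof.
  intros Hb m. pose proof (hat_d_0_pos beta Hb) as H0. revert H0.
  unfold hat_d. destruct excluded_middle_informative as [Hfin|Hinf].
  - destruct constructive_indefinite_description as [k Hk]. simpl. intros H0.
    exists (m * S k)%nat. split; [nia |].
    replace (hat_of (dseq beta) k (m * S k)%nat) with (hat_of (dseq beta) k 0%nat).
    + lia.
    + unfold hat_of. rewrite Nat.Div0.mod_mul, Nat.Div0.mod_0_l. reflexivity.
  - intros H0. apply NNPP. intros Hno. apply Hinf.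
    destruct (nat_last (fun j => dseq beta j <> 0%nat) m) as [k [Hk Hlast]].
    + simpl. lia.
    + intros j Hj Hdj. apply Hno. eauto.
    + exists k. split; auto. intros j Hj. apply NNPP. exact (Hlast j Hj).
Qed.

(** * Membership in the beta-shift *)

Lemma X_beta_shifts_lex_le (beta : R) (x : sequence) :
  X_beta beta x -> shifts_lex_le (hat_d beta) x.
Proof.
  intros [_ Hclose] k [n [Hpre Hn]].
  destruct (Hclose (/ 2 ^ (k + n))) as [b [[_ Hb] Hr]].
  { apply Rinv_0_lt_compat, pow_lt. lra. }
  pose proof (agree_of_rho_lt _ _ _ Hr) as Hxb.
  apply (lex_lt_asym (shiftn k b) (hat_d beta) (Hb k)).
  exists n. unfold shiftn in *. split.
  - intros i Hi. rewrite <- Hxb by lia. auto.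
  - rewrite <- Hxb by lia. exact Hn.
Qed.

Lemma X_beta_of_shifts_lex_le (beta : R) (x : sequence) :
  1 < beta -> in_alphabet beta x -> shifts_lex_le (hat_d beta) x -> X_beta beta x.
Proof.
  intros Hb Halph Hx. split; auto. intros eps He.
  destruct (exists_inv_pow2_lt eps He) as [L HL].
  exists (truncate L x). split; [split |].
  - intros i. unfold truncate. destruct (i <? L)%nat; [apply Halph | lia].
  - apply truncate_lex_lt; auto. apply hat_d_nonzero_unbounded. exact Hb.
  - eapply Rle_lt_trans; [| exact HL]. apply rho_le_of_agree. intros i Hi.
    unfold truncate. destruct (Nat.ltb_spec i L); [reflexivity | lia].
Qed.

(** * Linking two periodic points *)

(* One period of [link u v a b g] is [u_0 ... u_(a-1) 0^g v_0 ... v_(b-1) 0^g]. *)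
Definition link (u v : sequence) (a b g : nat) : sequence :=
  fun i =>
    let r := (i mod (a + g + (b + g)))%nat in
    if (r <? a)%nat then u r
    else if (r <? a + g)%nat then 0%nat
    else if (r <? a + g + b)%nat then v (r - (a + g))%nat
    else 0%nat.

Section Link.

Variables (u v : sequence) (a b g : nat).

Let q := (a + g + (b + g))%nat.

Ltac unfold_link := unfold link; fold q; rewrite Nat.mod_small by (unfold q; lia);
  repeat match goal with |- context [(?x <? ?y)%nat] => destruct (Nat.ltb_spec x y) end;
  try lia.

Lemma link_periodic (i : nat) : link u v a b g (i + q)%nat = link u v a b g i.
Proof.
  unfold link. fold q. replace (i + q)%nat with (i + 1 * q)%nat by lia.
  rewrite Nat.Div0.mod_add. reflexivity.
Qed.

Lemma link_first (i : nat) : (i < a)%nat -> link u v a b g i = u i.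
Proof. intros Hi. unfold_link. Qed.

Lemma link_first_gap (i : nat) : (i < g)%nat -> link u v a b g (a + i)%nat = 0%nat.
Proof. intros Hi. unfold_link. Qed.

Lemma link_second (i : nat) : (i < b)%nat -> link u v a b g (a + g + i)%nat = v i.
Proof. intros Hi. unfold_link. f_equal. lia. Qed.

Lemma link_second_gap (i : nat) : (i < g)%nat -> link u v a b g (a + g + b + i)%nat = 0%nat.
Proof. intros Hi. unfold_link. Qed.

Lemma link_shifts_lex_le (d : sequence) (P Q : nat) :
  (1 <= d 0%nat)%nat -> shifts_lex_le d u -> shifts_lex_le d v ->
  (1 <= P)%nat -> (P < g)%nat -> (forall i, u (i + P)%nat = u i) ->
  (1 <= Q)%nat -> (Q < g)%nat -> (forall i, v (i + Q)%nat = v i) ->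
  shifts_lex_le d (link u v a b g).
Proof.
  intros Hd0 Hu Hv HP HPg Hperu HQ HQg Hperv.
  apply (shifts_lex_le_periodic d _ q); [unfold q; lia | exact link_periodic |].
  intros k Hk.
  destruct (lt_dec k a); [| destruct (lt_dec k (a + g)); [| destruct (lt_dec k (a + g + b))]].
  - apply (not_lex_lt_shift_in_block d Hd0 _ u 0%nat a g P k); auto.
    + exact link_first.
    + exact link_first_gap.
  - apply not_lex_lt_shift_at_zero; auto.
    replace k with (a + (k - a))%nat by lia. apply link_first_gap. lia.
  - replace k with (a + g + (k - (a + g)))%nat by lia.
    apply (not_lex_lt_shift_in_block d Hd0 _ v (a + g)%nat b g Q); auto.
    + exact link_second.
    + exact link_second_gap.
    + lia.
  - apply not_lex_lt_shift_at_zero; auto.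
    replace k with (a + g + b + (k - (a + g + b)))%nat by lia.
    apply link_second_gap. unfold q in Hk. lia.
Qed.

Lemma link_in_alphabet (beta : R) :
  in_alphabet beta u -> in_alphabet beta v -> in_alphabet beta (link u v a b g).
Proof.
  intros Hu Hv i. unfold link.
  repeat destruct (_ <? _)%nat; (apply Hu || apply Hv || lia).
Qed.

End Link.

Lemma link_Per_beta (beta : R) (u v : sequence) (a b g P Q : nat) :
  1 < beta -> X_beta beta u -> X_beta beta v ->
  (1 <= P)%nat -> (P < g)%nat -> (forall i, shiftn P u i = u i) ->
  (1 <= Q)%nat -> (Q < g)%nat -> (forall i, shiftn Q v i = v i) ->
  Per_beta beta (link u v a b g).
Proof.
  intros Hb Hu Hv HP HPg Hperu HQ HQg Hperv. split.
  - apply X_beta_of_shifts_lex_le; auto.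
    + apply link_in_alphabet; [apply Hu | apply Hv].
    + apply (link_shifts_lex_le u v a b g _ P Q); auto using hat_d_0_pos, X_beta_shifts_lex_le.
  - exists (a + g + (b + g))%nat. split; [lia |].
    intros i. apply link_periodic.
Qed.

Theorem proposition5p11 (beta : R) (Hbeta : 1 < beta) :
  strongly_linkable (Per_beta beta).
Proof.
  intros y1 y2 [Hy1 [P1 [HP1 Hper1]]] [Hy2 [P2 [HP2 Hper2]]] eps Heps.
  destruct (exists_inv_pow2_lt eps Heps) as [M HM].
  set (g := (P1 + P2 + 1)%nat).
  destruct (linear_slack eps (M + g) Heps) as [N HN].
  exists N. intros p1 p2 Hp1 Hp2 _ _.
  set (a := (p1 + M)%nat). set (b := (p2 + M)%nat).
  exists (link y1 y2 a b g), (a + g)%nat, (a + g + (b + g))%nat.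
  split; [apply (link_Per_beta beta y1 y2 a b g P1 P2); auto; lia |].
  repeat split.
  - lia.
  - intros i. apply link_periodic.
  - lia.
  - replace (a + g)%nat with (p1 + (M + g))%nat by lia. auto.
  - apply (bowen_ball_of_agree y1 _ p1 M eps HM). intros i Hi. apply link_first. lia.
  - lia.
  - replace (a + g + (b + g) - (a + g))%nat with (p2 + (M + g))%nat by lia. auto.
  - apply (bowen_ball_of_agree y2 _ p2 M eps HM). intros i Hi.
    unfold shiftn. rewrite Nat.add_comm. apply link_second. lia.
Qed.
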